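(* Let $1\le r\le 8$, let $k$ be a positive integer, let $D\in|k(3H-E_1-\dots-E_r)|$ be an effective divisor on $\mathbb{S}_r$ and let $Q\in\mathbb{S}_r$. Write $f(D)$ for the image plane curve (of degree $3k$). If $Q\in E_1\cup\dots\cup E_r$, then $$\mathrm{mult}_Q(D)\le 2\,\mathrm{mult}_{f(Q)}(f(D))-k.$$ If $Q\notin E_1\cup\dots\cup E_r$, then $$\mathrm{mult}_Q(D)=\mathrm{mult}_{f(Q)}(f(D))\le 3k,$$ and if equality $\mathrm{mult}_Q(D)=3k$ holds, then $f(D)$ is a union of lines through $f(Q)$.
   Context: Let $P_1,\dots,P_r\in\mathbb{P}^2(\mathbb{C})$ be $r$ general points and $f\colon\mathbb{S}_r\to\mathbb{P}^2$ the blow-up at them, with exceptional curves $E_i=f^{-1}(P_i)$; $H$ is the pullback of the class of a line. For a divisor $D\in|k(3H-E_1-\dots-E_r)|$, $f(D)$ denotes the plane curve $f_*D$ of degree $3k$, so that $D=f^*(f(D))-kE_1-\dots-kE_r$. *)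

From HB Require Import structures.
From mathcomp Require Import all_boot all_order all_algebra.
From mathcomp Require Import mpoly.
From mathcomp Require Import complex.
From mathcomp Require Import reals.
Set Implicit Arguments. Unset Strict Implicit. Unset Printing Implicit Defensive.
Import Order.TTheory GRing.Theory Num.Theory.
Local Open Scope ring_scope.

Section Mult.
Variable F : fieldType.

(* Order of vanishing at the origin of a polynomial in n variables: the least
   total degree of a monomial occurring in p (0 for p = 0). *)
Definition mord0 n (p : {mpoly F[n]}) : nat :=
  \big[minn/msize p]_(m <- msupp p) mdeg m.

Definition homog3 (d : nat) (G : {mpoly F[3]}) : bool :=
  all [pred m | mdeg m == d] (msupp G).

(* Multiplicity of the plane curve V(G) at the point [q] of P^2 (q a nonzero
   vector of F^3): order at the origin of G(q + X), i.e. multiplicity of the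
   affine cone V(G) in F^3 at q. *)
Definition pmult (G : {mpoly F[3]}) (q : 'rV[F]_3) : nat :=
  mord0 (G \mPo [tuple (q 0 i)%:MP + 'X_i | i < 3]).

(* Local parametrisation of P^2 near [q], given a basis (q, w, w') of F^3:
   (s, t) |-> [q + s w + t w'].  Local equation of V(G) in this chart. *)
Definition chart_eq (G : {mpoly F[3]}) (q w w' : 'rV[F]_3) : {mpoly F[2]} :=
  G \mPo [tuple (q 0 i)%:MP + 'X_(@ord0 1) * (w 0 i)%:MP
                 + 'X_(@ord_max 1) * (w' 0 i)%:MP | i < 3].

(* Chart of the blow-up of P^2 at [p] (basis (p, w, w')):
   (u, v) |-> [p + u w + u v w']; the exceptional curve is u = 0 and the
   origin (u, v) = (0, 0) is the point of the exceptional curve corresponding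
   to the tangent direction w at [p].  Local equation of the total transform. *)
Definition blowup_eq (G : {mpoly F[3]}) (p w w' : 'rV[F]_3) : {mpoly F[2]} :=
  G \mPo [tuple (p 0 i)%:MP + 'X_(@ord0 1) * (w 0 i)%:MP
                 + 'X_(@ord0 1) * 'X_(@ord_max 1) * (w' 0 i)%:MP | i < 3].

(* Multiplicity of D = f^* V(G) - k E_1 - ... - k E_r at a point Q not on any
   exceptional curve, with f(Q) = [q], computed in the chart above. *)
Definition multD_off (G : {mpoly F[3]}) (q w w' : 'rV[F]_3) : nat :=
  mord0 (chart_eq G q w w').

(* Multiplicity of D = f^* V(G) - k E_1 - ... - k E_r at the point Q of E_i
   given by the tangent direction w at P_i = [p]: in the blow-up chart the
   local equation of D is blowup_eq G p w w' / u^k, whose order at the origin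
   is (order of blowup_eq) - k  (as an integer). *)
Definition multD_exc (k : nat) (G : {mpoly F[3]}) (p w w' : 'rV[F]_3) : int :=
  (mord0 (blowup_eq G p w w'))%:Z - k%:Z.

Definition linform (a : 'rV[F]_3) : {mpoly F[3]} := \sum_(i < 3) a 0 i *: 'X_i.

Definition union_of_lines_through (G : {mpoly F[3]}) (q : 'rV[F]_3) : Prop :=
  exists (c : F) (s : seq 'rV[F]_3),
    {in s, forall a : 'rV[F]_3, a != 0 /\ \sum_(i < 3) a 0 i * q 0 i = 0} /\
    G = c *: \prod_(a <- s) linform a.

End Mult.

From HB Require Import structures.
From mathcomp Require Import all_boot all_order all_algebra.
From mathcomp Require Import mpoly complex reals.
Set Implicit Arguments. Unset Strict Implicit. Unset Printing Implicit Defensive.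
Import Order.TTheory GRing.Theory Num.Theory.
Local Open Scope ring_scope.

(* Multiplicities are orders of vanishing at the origin (mord0) of local
   equations.  For a basis (q, w, w') of F^3 let H(x) = G(x0 q + x1 w + x2 w');
   the local equation of V(G) at [q] is its dehomogenisation C = H(1, s, t),
   while G(q + x) is H with 1 + l0(x), l1(x), l2(x) substituted, the l_i being
   coordinates in that basis.  As H is homogeneous, each of its monomials is
   determined by its dehomogenisation, so substituting anything for x0 (and
   forms without constant term for x1, x2) cannot lower the order below ord C;
   conversely C is the restriction of G(q + x) to a plane.  Hence
   mult_q = ord C <= deg C <= deg G.  If ord C = deg G, then C is a binary
   form, hence a product of linear forms, each of which becomes a line through
   [q].  On the exceptional curve, the blow-up chart (u, v) |-> (u, u v) at most
   doubles degrees of monomials, whence ord <= 2 mult. *)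

Definition mord_ge_pred {n} {R : nzRingType} (N : nat) : pred {mpoly R[n]} :=
  fun p => all [pred m | N <= mdeg m]%N (msupp p).
Arguments mord_ge_pred _ _ _ _ /.
Definition mord_ge {n} {R : nzRingType} (N : nat) : qualifier 0 {mpoly R[n]} :=
  [qualify p | mord_ge_pred N p].

Section MordGe.
Context (n : nat) (R : nzRingType).
Implicit Types (p q : {mpoly R[n]}) (m : 'X_{1..n}).

Lemma mord_geP N p : reflect {in msupp p, forall m, N <= mdeg m}%N (p \is mord_ge N).
Proof. exact: allP. Qed.

Lemma mord_ge_submod_closed N : submod_closed (@mord_ge n R N).
Proof.
split=> [|c p q]; first by rewrite qualifE /= msupp0.
move=> /mord_geP hp /mord_geP hq; apply/mord_geP => m /msuppD_le.
by rewrite mem_cat => /orP[/msuppZ_le/hp|/hq].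
Qed.

HB.instance Definition _ N :=
  GRing.isSubmodClosed.Build R {mpoly R[n]} (mord_ge_pred N)
    (mord_ge_submod_closed N).

Lemma mord_ge0 p : p \is mord_ge 0.
Proof. by apply/mord_geP. Qed.

Lemma mord_geW N N' p : (N' <= N)%N -> p \is mord_ge N -> p \is mord_ge N'.
Proof. by move=> le /mord_geP h; apply/mord_geP => m /h; apply: leq_trans. Qed.

Lemma mord_geX N m : ('X_[m] \is @mord_ge n R N) = (N <= mdeg m)%N.
Proof. by rewrite qualifE /= msuppX /= andbT. Qed.

Lemma mord_geM N N' p q :
  p \is mord_ge N -> q \is mord_ge N' -> p * q \is mord_ge (N + N').
Proof.
move=> /mord_geP hp /mord_geP hq; apply/mord_geP => m /msuppM_le /allpairsP.
by case=> -[m1 m2] /= [/hp h1 /hq h2 ->]; rewrite mdegD leq_add.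
Qed.

Lemma mord_geMl N p q : q \is mord_ge N -> p * q \is mord_ge N.
Proof. exact: mord_geM (mord_ge0 p). Qed.

Lemma mord_geXn N p k : p \is mord_ge N -> p ^+ k \is mord_ge (N * k).
Proof.
move=> hp; elim: k => [|k IH]; first by rewrite muln0 mord_ge0.
by rewrite exprS mulnS mord_geM.
Qed.

End MordGe.

Section MordComp.
Context (n k : nat) (R : comNzRingType).
Implicit Types (p : {mpoly R[n]}) (lq : n.-tuple {mpoly R[k]}).

Lemma mord_ge_prod N (f : 'I_n -> {mpoly R[k]}) (m : 'X_{1..n}) :
  (forall i, f i \is mord_ge N) -> \prod_(i < n) f i ^+ m i \is mord_ge (N * mdeg m).
Proof.
move=> hl; rewrite mdegE big_distrr /=.
elim/big_ind2: _ => [|a x b y|i _]; first by rewrite mord_ge0.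
  exact: mord_geM.
exact: mord_geXn.
Qed.

Lemma comp_mord_ge N p lq :
  (forall i, tnth lq i \is mord_ge 1) -> p \is mord_ge N -> p \mPo lq \is mord_ge N.
Proof.
move=> hl /mord_geP hp; rewrite comp_mpolyEX big_seq rpred_sum // => m /hp hm.
rewrite rpredZ // comp_mpolyX; apply: mord_geW hm _.
by rewrite -[mdeg m]mul1n mord_ge_prod.
Qed.

End MordComp.

Section Mord0.
Context (n : nat) (R : fieldType).
Implicit Types (p : {mpoly R[n]}) (m : 'X_{1..n}).

Lemma mord0_le_mdeg p m : m \in msupp p -> (mord0 p <= mdeg m)%N.
Proof.
rewrite /mord0; elim: (msupp p) => // m' s IH; rewrite big_cons in_cons.
by case/orP => [/eqP <-|/IH]; [apply: geq_minl | apply/leq_trans/geq_minr].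
Qed.

Lemma mord0_mdeg p : p != 0 -> exists2 m, m \in msupp p & mord0 p = mdeg m.
Proof.
move=> nz_p; pose P v := (v == msize p) || (v \in [seq mdeg m | m <- msupp p]).
have : P (mord0 p).
  rewrite /mord0 big_seq; apply: (big_ind P) => [|a b|m mp]; first by rewrite /P eqxx.
    by rewrite /minn; case: ifP.
  by rewrite /P map_f ?orbT.
case/orP => [/eqP E|/mapP[m mp ->]]; last by exists m.
(* the seed msize p of the minimum exceeds every degree in the support *)
have := msize_mdeg_lt (mlead_supp nz_p).
by rewrite -E ltnNge mord0_le_mdeg // mlead_supp.
Qed.

Lemma mord_ge_mord0 p : p \is mord_ge (mord0 p).
Proof. by apply/mord_geP => m /mord0_le_mdeg. Qed.

Lemma leq_mord0 N p : p != 0 -> p \is mord_ge N -> (N <= mord0 p)%N.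
Proof. by move=> /mord0_mdeg[m mp ->] /mord_geP; apply. Qed.

Lemma mord0_lt_msize p : p != 0 -> (mord0 p < msize p)%N.
Proof. by move=> /mord0_mdeg[m mp ->]; apply: msize_mdeg_lt. Qed.

Lemma mord0_0 : mord0 (0 : {mpoly R[n]}) = 0%N.
Proof. by rewrite /mord0 msupp0 big_nil msize0. Qed.

End Mord0.

Section CompMisc.
Context (R : comNzRingType).

Lemma comp_mpolyA n k l (p : {mpoly R[n]}) (s : n.-tuple {mpoly R[k]})
    (t : k.-tuple {mpoly R[l]}) :
  (p \mPo s) \mPo t = p \mPo [tuple tnth s i \mPo t | i < n].
Proof.
rewrite [p \mPo s]comp_mpolyEX raddf_sum [RHS]comp_mpolyEX; apply: eq_bigr => m _.
rewrite /= linearZ /= !comp_mpolyX rmorph_prod; congr (_ *: _).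
by apply: eq_bigr => i _; rewrite rmorphXn tnth_mktuple.
Qed.

Lemma dhomog_comp n k d (p : {mpoly R[n]}) (lq : n.-tuple {mpoly R[k]}) :
  (forall i, tnth lq i \is 1.-homog) -> p \is d.-homog -> p \mPo lq \is d.-homog.
Proof.
move=> hl hp; rewrite comp_mpolyEX big_seq rpred_sum // => m mp.
have dm : mdeg m = d := dhomog_mf hp mp.
rewrite rpredZ // comp_mpolyX -dm mdegE.
elim/big_ind2: _ => [|a x b y|i _]; [exact: dhomog1 | exact: dhomogM |].
by have := dhomogMn (m i) (hl i); rewrite mul1n.
Qed.

End CompMisc.

Section Dehomog.
Context (n : nat) (R : comNzRingType).
Implicit Types (p q : {mpoly R[n.+1]}) (m : 'X_{1..n.+1}).

Definition mnmtail m : 'X_{1..n} := [multinom m (lift ord0 j) | j < n].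

(* X_0 := 1 and X_(j+1) := X_j *)
Definition mdehomog p : {mpoly R[n]} :=
  p \mPo [tuple oapp (fun j => 'X_j) 1 (unlift ord0 i) | i < n.+1].

Lemma mdeg_mnmtail m : mdeg m = (m ord0 + mdeg (mnmtail m))%N.
Proof.
rewrite !mdegE big_ord_recl; congr (_ + _)%N.
by apply: eq_bigr => j _; rewrite mnmE.
Qed.

Lemma mnm_ord0_tail m m' : m ord0 = m' ord0 -> mnmtail m = mnmtail m' -> m = m'.
Proof.
move=> E0 Et; apply/mnmP => i; case: (unliftP ord0 i) => [j ->|-> //].
by have := congr1 (fun t : 'X_{1..n} => t j) Et; rewrite /= !mnmE.
Qed.

Lemma mdehomogX m : mdehomog 'X_[m] = 'X_[mnmtail m].
Proof.
rewrite /mdehomog comp_mpolyX big_ord_recl tnth_mktuple unlift_none expr1n mul1r.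
rewrite mpolyXE_id; apply: eq_bigr => j _.
by rewrite tnth_mktuple liftK mnmE.
Qed.

Lemma mdehomogE p : mdehomog p = \sum_(m <- msupp p) p@_m *: 'X_[mnmtail m].
Proof.
rewrite /mdehomog {1}[p]mpolyE raddf_sum; apply: eq_bigr => m _.
by rewrite /= comp_mpolyZ -/(mdehomog 'X_[m]) mdehomogX.
Qed.

Section Homogeneous.
Context (d : nat).

Lemma mcoeff_mdehomog p m :
  p \is d.-homog -> mdeg m = d -> (mdehomog p)@_(mnmtail m) = p@_m.
Proof.
move=> hp dm; rewrite mdehomogE [in RHS](mpolyE p) !raddf_sum /=.
rewrite !big_seq; apply: eq_bigr => m' mp'; have dm' : mdeg m' = d := dhomog_mf hp mp'.
rewrite !mcoeffZ !mcoeffX; congr (_ * (_ : bool)%:R).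
apply/eqP/eqP => [Et|-> //]; apply: mnm_ord0_tail => //.
by apply/eqP; rewrite -(eqn_add2r (mdeg (mnmtail m))) -{1}Et -!mdeg_mnmtail dm dm'.
Qed.

Lemma mdehomog_inj p q :
  p \is d.-homog -> q \is d.-homog -> mdehomog p = mdehomog q -> p = q.
Proof.
move=> hp hq E; apply/mpolyP => m; have [dm|dm] := eqVneq (mdeg m) d.
  by rewrite -(mcoeff_mdehomog hp dm) -(mcoeff_mdehomog hq dm) E.
by rewrite !(dhomog_nemf_coeff _ dm).
Qed.

Lemma mdehomog_eq0 p : p \is d.-homog -> (mdehomog p == 0) = (p == 0).
Proof.
move=> hp; apply/eqP/eqP => [E|->]; last exact: comp_mpoly0.
apply: (mdehomog_inj hp (dhomog0 _ _ _)).
by rewrite E /mdehomog comp_mpoly0.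
Qed.

Lemma msize_mdehomog p : p \is d.-homog -> (msize (mdehomog p) <= d.+1)%N.
Proof.
move=> hp; rewrite msizeE; apply/bigmax_leqP_seq => t + _.
rewrite mdehomogE => /msupp_sum_le /flatten_mapP[m]; rewrite filter_predT => mp.
move=> /msuppZ_le /mem_msuppXP <-; have dm : mdeg m = d := dhomog_mf hp mp.
by rewrite ltnS -dm [X in (_ <= X)%N]mdeg_mnmtail leq_addl.
Qed.

Lemma mdehomogK p : p \is d.-homog -> mdehomog p \is d.-homog ->
  p = mdehomog p \mPo [tuple 'X_(lift ord0 j) | j < n].
Proof.
move=> hp hdp; apply: mdehomog_inj => //.
  by apply: dhomog_comp => // j; rewrite tnth_mktuple dhomogX; apply/eqP/mdeg1.
rewrite /mdehomog comp_mpolyA -[LHS]comp_mpoly_id.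
congr (_ \mPo _); apply: eq_from_tnth => j.
by rewrite !tnth_mktuple comp_mpolyXU -tnth_nth tnth_mktuple liftK.
Qed.

(* By homogeneity, the degree of a monomial in the variables other than X_0 is
   the degree of its dehomogenisation, whatever is substituted for X_0. *)
Lemma comp_mord_ge_mdehomog N k p (lq : n.+1.-tuple {mpoly R[k]}) :
  p \is d.-homog -> (forall j, tnth lq (lift ord0 j) \is mord_ge 1) ->
  mdehomog p \is mord_ge N -> p \mPo lq \is mord_ge N.
Proof.
move=> hp hl /mord_geP hN; rewrite comp_mpolyEX big_seq rpred_sum // => m mp.
have dm : mdeg m = d := dhomog_mf hp mp.
have /hN tailN : mnmtail m \in msupp (mdehomog p).
  by rewrite mcoeff_msupp mcoeff_mdehomog // -mcoeff_msupp.
rewrite rpredZ // comp_mpolyX big_ord_recl mord_geMl // (mord_geW tailN) //.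
rewrite (eq_bigr (fun j => tnth lq (lift ord0 j) ^+ mnmtail m j)) => [|j _]; last first.
  by rewrite mnmE.
by rewrite -[mdeg _]mul1n mord_ge_prod.
Qed.

End Homogeneous.
End Dehomog.

Section Blowup.
Context (n : nat) (R : comNzRingType).
Implicit Types (p : {mpoly R[n.+1]}) (m : 'X_{1..n.+1}).

Definition mblowup : n.+1.-tuple {mpoly R[n.+1]} :=
  [tuple if i == ord0 then 'X_ord0 else 'X_ord0 * 'X_i | i < n.+1].

Definition mnmblowup m : 'X_{1..n.+1} :=
  [multinom if i == ord0 then mdeg m else m i | i < n.+1].

Lemma mnmtail_mnmblowup m : mnmtail (mnmblowup m) = mnmtail m.
Proof. by apply/mnmP => j; rewrite !mnmE lift_eqF. Qed.

Lemma mdeg_mnmblowup m : mdeg (mnmblowup m) = (mdeg m + mdeg (mnmtail m))%N.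
Proof. by rewrite mdeg_mnmtail mnmtail_mnmblowup mnmE eqxx. Qed.

Lemma mnmblowup_inj : injective mnmblowup.
Proof.
move=> m m' E; have Et : mnmtail m = mnmtail m'.
  by rewrite -mnmtail_mnmblowup E mnmtail_mnmblowup.
apply: mnm_ord0_tail => //; have := congr1 mdeg E.
by rewrite !mdeg_mnmblowup Et => /addIn; rewrite !mdeg_mnmtail Et => /addIn.
Qed.

Lemma mblowupX m : 'X_[m] \mPo mblowup = 'X_[mnmblowup m].
Proof.
rewrite comp_mpolyX mpolyXE_id !big_ord_recl /mblowup /mnmblowup tnth_mktuple mnmE eqxx.
under eq_bigr => j _ do rewrite tnth_mktuple lift_eqF exprMn.
under [in RHS]eq_bigr => j _ do rewrite mnmE lift_eqF.
by rewrite big_split /= prodrXr mulrA -exprD mdegE big_ord_recl.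
Qed.

Lemma mcoeff_mblowup p m : (p \mPo mblowup)@_(mnmblowup m) = p@_m.
Proof.
rewrite comp_mpolyEX [in RHS](mpolyE p) !raddf_sum; apply: eq_bigr => m' _.
by rewrite /= !mcoeffZ mblowupX !mcoeffX (inj_eq mnmblowup_inj).
Qed.

End Blowup.

Lemma mord0_mblowup n (F : fieldType) (p : {mpoly F[n.+1]}) :
  (mord0 (p \mPo mblowup n F) <= 2 * mord0 p)%N.
Proof.
have [->|nz_p] := eqVneq p 0; first by rewrite comp_mpoly0 mord0_0.
have [m mp ->] := mord0_mdeg nz_p.
have mpb : mnmblowup m \in msupp (p \mPo mblowup n F).
  by rewrite mcoeff_msupp mcoeff_mblowup -mcoeff_msupp.
apply: leq_trans (mord0_le_mdeg mpb) _.
by rewrite mdeg_mnmblowup mul2n -addnn leq_add2l [X in (_ <= X)%N]mdeg_mnmtail leq_addl.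
Qed.

Section LinearForms.
Context (R : comNzRingType).

Definition lform n (a : 'rV[R]_n) : {mpoly R[n]} := \sum_(i < n) a 0 i *: 'X_i.

Definition mlin m n (M : 'M[R]_(m, n)) : m.-tuple {mpoly R[n]} :=
  [tuple lform (row i M) | i < m].

Definition mshift n (v : 'rV[R]_n) : n.-tuple {mpoly R[n]} :=
  [tuple (v 0 i)%:MP + 'X_i | i < n].

Lemma lform_comp n k (a : 'rV[R]_n) (lq : n.-tuple {mpoly R[k]}) :
  lform a \mPo lq = \sum_(i < n) a 0 i *: tnth lq i.
Proof.
rewrite raddf_sum; apply: eq_bigr => i _.
by rewrite /= comp_mpolyZ comp_mpolyXU -tnth_nth.
Qed.

Lemma lform_homog n (a : 'rV[R]_n) : lform a \is 1.-homog.
Proof. by rewrite rpred_sum // => i _; rewrite rpredZ // dhomogX; apply/eqP/mdeg1. Qed.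

Lemma lform_mord_ge n (a : 'rV[R]_n) : lform a \is mord_ge 1.
Proof. by rewrite rpred_sum // => i _; rewrite rpredZ // mord_geX mdeg1. Qed.

Lemma lform_comp_lform m n (a : 'rV[R]_m) (T : 'M[R]_(m, n)) :
  lform a \mPo [tuple lform (row j T) | j < m] = lform (a *m T).
Proof.
rewrite lform_comp; under eq_bigr => j _ do rewrite tnth_mktuple /lform scaler_sumr.
rewrite exchange_big; apply: eq_bigr => i _; rewrite mxE scaler_suml.
by apply: eq_bigr => j _; rewrite scalerA mxE.
Qed.

Lemma mlin_comp m n k (M : 'M[R]_(m, n)) (N : 'M[R]_(n, k)) :
  [tuple tnth (mlin M) i \mPo mlin N | i < m] = mlin (M *m N).
Proof.
by apply: eq_from_tnth => i; rewrite !tnth_mktuple lform_comp_lform row_mul.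
Qed.

Lemma mlin1 n : mlin 1%:M = [tuple 'X_i | i < n].
Proof.
apply: eq_from_tnth => i; rewrite !tnth_mktuple /lform (bigD1 i) //= big1 ?addr0.
  by rewrite !mxE eqxx scale1r.
by move=> j /negbTE ji; rewrite !mxE eq_sym ji scale0r.
Qed.

Lemma comp_mlinK n (p : {mpoly R[n]}) (M N : 'M[R]_n) :
  M *m N = 1%:M -> (p \mPo mlin M) \mPo mlin N = p.
Proof. by move=> MN; rewrite comp_mpolyA mlin_comp MN mlin1 comp_mpoly_id. Qed.

Lemma lform_comp_shift n (a v : 'rV[R]_n) :
  lform a \mPo mshift v = (\sum_(i < n) a 0 i * v 0 i)%:MP + lform a.
Proof.
rewrite lform_comp rmorph_sum -big_split; apply: eq_bigr => i _.
by rewrite tnth_mktuple scalerDr -mul_mpolyC rmorphM.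
Qed.

Lemma dhomog_prod_lform n (s : seq 'rV[R]_n) :
  \prod_(a <- s) lform a \is (size s).-homog.
Proof.
elim: s => [|a s IH]; first by rewrite big_nil dhomog1.
by rewrite big_cons; apply: dhomogM (lform_homog a) IH.
Qed.

Lemma mdehomog_lform n (a : 'rV[R]_n.+1) :
  mdehomog (lform a) = (a 0 ord0)%:MP + \sum_(j < n) a 0 (lift ord0 j) *: 'X_j.
Proof.
rewrite /mdehomog lform_comp big_ord_recl tnth_mktuple unlift_none -alg_mpolyC.
by congr (_ + _); apply: eq_bigr => j _; rewrite tnth_mktuple liftK.
Qed.

End LinearForms.

Section AffineChart.
Context (F : fieldType) (n d : nat) (G : {mpoly F[n.+1]}) (B : 'M[F]_n.+1).
Hypotheses (homG : G \is d.-homog) (unitB : B \in unitmx).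

(* The rows of B are a basis (q, b_1, ..., b_n); H is G in these coordinates and
   C is the equation of V(G) in the chart s |-> [q + s_1 b_1 + ... + s_n b_n]. *)
Local Notation q := (row ord0 B).
Local Notation H := (G \mPo mlin B^T).
Local Notation C := (mdehomog H).

Lemma homog_chart : H \is d.-homog.
Proof. by apply: dhomog_comp homG => i; rewrite tnth_mktuple lform_homog. Qed.

Lemma chartK : H \mPo mlin (invmx B)^T = G.
Proof. by apply: comp_mlinK; rewrite -trmx_mul mulVmx // trmx1. Qed.

Lemma mdehomog_chart :
  C = (G \mPo mshift q) \mPo mlin (rowsub (lift ord0) B)^T.
Proof.
rewrite /mdehomog !comp_mpolyA; congr (G \mPo _); apply: eq_from_tnth => i.
rewrite !tnth_mktuple lform_comp big_ord_recl tnth_mktuple unlift_none.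
rewrite rmorphD /= comp_mpolyC comp_mpolyXU -tnth_nth tnth_mktuple.
rewrite !mxE -alg_mpolyC; congr (_ + _); rewrite /lform; apply: eq_bigr => j _.
by rewrite tnth_mktuple liftK !mxE.
Qed.

(* The coordinates of q + x in the basis B are e_0 + x B^-1. *)
Lemma shift_chart :
  G \mPo mshift q = H \mPo [tuple (i == ord0)%:R + tnth (mlin (invmx B)^T) i | i < n.+1].
Proof.
rewrite -{1}chartK comp_mpolyA; congr (H \mPo _); apply: eq_from_tnth => i.
rewrite !tnth_mktuple lform_comp_shift eq_sym -mpolyC_nat; congr (_%:MP + _).
have := congr1 (fun M : 'M[F]_n.+1 => M ord0 i) (mulmxV unitB).
by rewrite !mxE => <-; apply: eq_bigr => j _; rewrite !mxE mulrC.
Qed.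

Lemma mdehomog_chart_neq0 : G != 0 -> C != 0.
Proof.
move=> nzG; rewrite (mdehomog_eq0 homog_chart).
by apply: contraNneq nzG => H0; rewrite -chartK H0 comp_mpoly0.
Qed.

Lemma mord0_chart : G != 0 -> mord0 C = mord0 (G \mPo mshift q).
Proof.
move=> /mdehomog_chart_neq0 nzC.
have nzA : G \mPo mshift q != 0.
  by apply: contraNneq nzC => A0; rewrite mdehomog_chart A0 comp_mpoly0.
apply/eqP; rewrite eqn_leq; apply/andP; split.
  apply: leq_mord0 nzA _; rewrite shift_chart.
  apply: comp_mord_ge_mdehomog homog_chart _ (mord_ge_mord0 _) => j.
  by rewrite !tnth_mktuple lift_eqF add0r lform_mord_ge.
apply: leq_mord0 nzC _; rewrite mdehomog_chart.
by apply: comp_mord_ge (mord_ge_mord0 _) => i; rewrite tnth_mktuple lform_mord_ge.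
Qed.

Lemma mord0_shift_le : G != 0 -> (mord0 (G \mPo mshift q) <= d)%N.
Proof.
move=> nzG; rewrite -mord0_chart // -ltnS.
exact: leq_trans (mord0_lt_msize (mdehomog_chart_neq0 nzG)) (msize_mdehomog homog_chart).
Qed.

Lemma homog_chart_mord0 : mord0 C = d -> C \is d.-homog.
Proof.
move=> ordC; apply/allP => m mC; rewrite /= eqn_leq -ltnS.
rewrite (leq_trans (msize_mdeg_lt mC) (msize_mdehomog homog_chart)) /=.
by rewrite -ordC mord0_le_mdeg.
Qed.

Lemma chart_lines : mord0 C = d ->
  G = C \mPo [tuple tnth (mlin (invmx B)^T) (lift ord0 j) | j < n].
Proof.
move=> /homog_chart_mord0 homC.
rewrite -{1}chartK {1}(mdehomogK homog_chart homC) comp_mpolyA.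
congr (C \mPo _); apply: eq_from_tnth => j.
by rewrite !tnth_mktuple comp_mpolyXU -tnth_nth tnth_mktuple.
Qed.

Local Notation T := (rowsub (lift ord0) (invmx B)^T).

Lemma lform_chart_lines (a : 'rV[F]_n) :
  lform a \mPo [tuple tnth (mlin (invmx B)^T) (lift ord0 j) | j < n] = lform (a *m T).
Proof.
rewrite -lform_comp_lform; congr (_ \mPo _); apply: eq_from_tnth => j.
by rewrite !tnth_mktuple row_rowsub.
Qed.

Lemma chart_line_through (a : 'rV[F]_n) : \sum_(i < n.+1) (a *m T) 0 i * q 0 i = 0.
Proof.
under eq_bigr => i _ do rewrite mxE mulr_suml.
rewrite exchange_big big1 // => j _.
under eq_bigr => i _ do rewrite -mulrA; rewrite -mulr_sumr.
have := congr1 (fun M : 'M[F]_n.+1 => M ord0 (lift ord0 j)) (mulmxV unitB).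
rewrite !mxE eq_liftF => BBi0.
suff -> : \sum_(i < n.+1) T j i * q 0 i = 0 by rewrite mulr0.
by rewrite -[RHS]/(false%:R) -BBi0; apply: eq_bigr => i _; rewrite !mxE mulrC.
Qed.

Lemma mul_chart_lines_eq0 (a : 'rV[F]_n) : (a *m T == 0) = (a == 0).
Proof.
have TS : T *m (rowsub (lift ord0) B)^T = 1%:M.
  apply/matrixP => j k.
  have := congr1 (fun M : 'M[F]_n.+1 => M (lift ord0 k) (lift ord0 j)) (mulmxV unitB).
  rewrite !mxE (inj_eq lift_inj) eq_sym => <-.
  by apply: eq_bigr => i _; rewrite !mxE mulrC.
apply/eqP/eqP => [aT0|->]; last exact: mul0mx.
by rewrite -[a]mulmx1 -TS mulmxA aT0 mul0mx.
Qed.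

End AffineChart.

Section BinaryForms.
Context (F : closedFieldType).

Lemma mpoly1_factor (D : {mpoly F[1]}) e : (msize D <= e.+1)%N ->
  exists c (r : seq F), (size r <= e)%N /\ D = c *: \prod_(z <- r) ('X_ord0 - z%:MP).
Proof.
move=> hD; pose P : {poly F} := \sum_(m <- msupp D) D@_m *: 'X^(m ord0).
pose iota (p : {poly F}) : {mpoly F[1]} := (map_poly (@mpolyC 1 F) p).['X_ord0].
have DE : D = iota P.
  rewrite /iota /P raddf_sum horner_sum {1}[D]mpolyE; apply: eq_bigr => m _ /=.
  by rewrite -mul_polyC rmorphM /= map_polyC map_polyXn hornerCM hornerXn
    (mpolyXE_id _ m) big_ord1 mul_mpolyC.
have [P0|nzP] := eqVneq P 0.
  by exists 0, [::]; rewrite DE P0 /iota map_poly0 horner0 scale0r.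
have [r rP] := closed_field_poly_normal P.
exists (lead_coef P), r; split.
  have : (size P <= e.+1)%N.
    apply: leq_trans (size_sum _ _ _) _; apply/bigmax_leqP_seq => m mD _.
    apply: leq_trans (size_scale_leq _ _) _; rewrite size_polyXn.
    by apply: leq_trans hD; have := msize_mdeg_lt mD; rewrite mdegE big_ord1.
  by rewrite rP size_scale ?lead_coef_eq0 // size_prod_XsubC.
rewrite DE {1}rP /iota map_polyZ hornerZ rmorph_prod horner_prod /= mul_mpolyC.
by congr (_ *: _); apply: eq_bigr => z _; rewrite map_polyXsubC hornerXsubC.
Qed.

Lemma binary_form_factor (C : {mpoly F[2]}) d : C \is d.-homog ->
  exists c (s : seq 'rV[F]_2), {in s, forall a, a != 0} /\
    C = c *: \prod_(a <- s) lform a.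
Proof.
move=> homC; have [c [r [le_rd DE]]] := mpoly1_factor (msize_mdehomog homC).
pose e0 : 'rV[F]_2 := \row_i (i == ord0)%:R.
pose ez z : 'rV[F]_2 := \row_i (if i == ord0 then - z else 1).
exists c, (nseq (d - size r) e0 ++ map ez r); split.
  move=> a; rewrite mem_cat => /orP[/nseqP[-> _]|/mapP[z _ ->]].
    by apply/eqP => /rowP/(_ ord0); rewrite !mxE eqxx => /eqP; rewrite oner_eq0.
  by apply/eqP => /rowP/(_ ord_max); rewrite !mxE /= => /eqP; rewrite oner_eq0.
apply: (mdehomog_inj homC).
  rewrite rpredZ //; have := dhomog_prod_lform (nseq (d - size r) e0 ++ map ez r).
  by rewrite size_cat size_nseq size_map subnK.
rewrite DE /mdehomog linearZ rmorph_prod big_cat /= big_map.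
have -> : \prod_(a <- nseq (d - size r) e0) mdehomog (lform a) = 1.
  rewrite big1_seq // => a /andP[_]; rewrite mem_nseq => /andP[_ /eqP ->].
  by rewrite mdehomog_lform big_ord1 !mxE /= scale0r addr0.
rewrite mul1r; congr (_ *: _); apply: eq_bigr => z _.
by rewrite -[_ \mPo _]/(mdehomog _) mdehomog_lform big_ord1 !mxE /= scale1r rmorphN addrC.
Qed.

End BinaryForms.

Section PlaneCharts.
Context (F : fieldType) (G : {mpoly F[3]}) (q w w' : 'rV[F]_3).

Local Notation B := (col_mx q (col_mx w w') : 'M[F]_3).

Lemma col_mx3E i :
  [/\ B ord0 i = q 0 i, B (lift ord0 ord0) i = w 0 i & B (lift ord0 ord_max) i = w' 0 i].
Proof.
have r0 : (ord0 : 'I_3) = lshift 2 (0 : 'I_1) by apply/val_inj.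
have r1 : (ord0 : 'I_2) = lshift 1 (0 : 'I_1) by apply/val_inj.
have r2 : (ord_max : 'I_2) = rshift 1 (0 : 'I_1) by apply/val_inj.
split; first by rewrite r0; exact: (col_mxEu q (col_mx w w') 0 i).
  by rewrite -rshift1 r1; exact: etrans (col_mxEd q _ _ i) (col_mxEu w w' 0 i).
by rewrite -rshift1 r2; exact: etrans (col_mxEd q _ _ i) (col_mxEd w w' 0 i).
Qed.

Lemma row0_col_mx3 : row ord0 B = q.
Proof. by apply/rowP => i; rewrite mxE; case: (col_mx3E i). Qed.

Lemma chart_eqE : chart_eq G q w w' = mdehomog (G \mPo mlin B^T).
Proof.
rewrite /mdehomog comp_mpolyA; congr (G \mPo _); apply: eq_from_tnth => i.
rewrite !tnth_mktuple -/(mdehomog _) mdehomog_lform big_ord_recl big_ord1.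
rewrite ![row _ _ _ _]mxE ![_^T _ _]mxE (_ : lift ord0 ord0 = ord_max :> 'I_2).
  by rewrite addrA ![_ * _%:MP]mulrC !mul_mpolyC; case: (col_mx3E i) => <- <- <-.
exact/val_inj.
Qed.

Lemma blowup_eqE : blowup_eq G q w w' = chart_eq G q w w' \mPo mblowup 1 F.
Proof.
rewrite /chart_eq comp_mpolyA; congr (G \mPo _); apply: eq_from_tnth => i.
rewrite !tnth_mktuple !rmorphD !rmorphM /= !comp_mpolyC !comp_mpolyXU.
by rewrite -!tnth_nth !tnth_mktuple.
Qed.

End PlaneCharts.

Lemma chart_union_of_lines (F : closedFieldType) (G : {mpoly F[3]}) d (B : 'M[F]_3) :
  G \is d.-homog -> B \in unitmx -> mord0 (mdehomog (G \mPo mlin B^T)) = d ->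
  union_of_lines_through G (row ord0 B).
Proof.
move=> homG unitB ordC.
have [c [s [nz_s CE]]] := binary_form_factor (homog_chart_mord0 homG ordC).
exists c, [seq a *m rowsub (lift ord0) (invmx B)^T | a <- s]; split.
  move=> _ /mapP[a sa ->]; split; first by rewrite mul_chart_lines_eq0 // nz_s.
  exact: chart_line_through.
rewrite {1}(chart_lines homG unitB ordC) CE linearZ rmorph_prod big_map /=.
by congr (_ *: _); apply: eq_bigr => a _; rewrite lform_chart_lines.
Qed.

Theorem lemma2 (R : realType) (r : nat) :
  (1 <= r <= 8)%N ->
  (* "general points": the statement holds for all configurations M of r points
     (rows of M) outside the zero locus of some nonzero polynomial F *)
  exists F : {mpoly R[i][r * 3]}, F != 0 /\
  forall M : 'M[R[i]]_(r, 3), F.@[mxvec M 0] != 0 ->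
  forall (k : nat) (G : {mpoly R[i][3]}),
    (0 < k)%N -> G != 0 -> homog3 (3 * k) G ->
    (forall j : 'I_r, (k <= pmult G (row j M))%N) ->
    (* Q on the exceptional curve E_j *)
    (forall (j : 'I_r) (w w' : 'rV[R[i]]_3),
        row_free (col_mx (row j M) (col_mx w w')) ->
        (multD_exc k G (row j M) w w' <= 2 * (pmult G (row j M))%:Z - k%:Z)%R)
    /\
    (* Q not on any exceptional curve, f(Q) = [q] *)
    (forall q w w' : 'rV[R[i]]_3,
        (forall j : 'I_r, row_free (col_mx q (row j M))) ->
        row_free (col_mx q (col_mx w w')) ->
        multD_off G q w w' = pmult G q /\
        (pmult G q <= 3 * k)%N /\
        ((multD_off G q w w' = 3 * k)%N -> union_of_lines_through G q)).
Proof.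
(* The bounds hold for every configuration of points, so the genericity
   polynomial is 1. *)
move=> _; exists 1; split; first exact: oner_neq0.
move=> M _ k G _ nzG homG _; split.
  move=> j w w'; rewrite row_free_unit => unitB.
  have := mord0_mblowup (mdehomog (G \mPo mlin (col_mx (row j M) (col_mx w w'))^T)).
  rewrite (mord0_chart homG unitB nzG) row0_col_mx3 -chart_eqE -blowup_eqE.
  by rewrite /multD_exc /pmult -/(mshift _) lerD2r -[X in X * _]/(2%:Z) -PoszM lez_nat.
move=> q w w' _; rewrite row_free_unit => unitB.
have offE : multD_off G q w w' = pmult G q.
  by rewrite /multD_off chart_eqE (mord0_chart homG unitB nzG) row0_col_mx3.
split=> //; split; first by have := mord0_shift_le homG unitB nzG; rewrite row0_col_mx3.
rewrite /multD_off chart_eqE -{2}(row0_col_mx3 q w w') => ordC.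
exact: chart_union_of_lines homG unitB ordC.
Qed.
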